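(* Let $G$, $p$ and $\ell$ be as in the construction described in the context. Every acyclic matching of $G$ of size at least $\ell$ saturates $p$; consequently, every such matching contains an edge $pp_q$ for some $q\in[t]$.
   Context: Construction. Let $n=3c$ with $c\in\mathbb{N}$, $X=[n]$, and let $(X,\mathcal{S}_1),\dots,(X,\mathcal{S}_t)$ be instances of \textsc{Exact-3-Cover} (each $\mathcal{S}_i$ a collection of 3-element subsets of $X$, all $\mathcal{S}_i$ of the same size $m$ and pairwise distinct as collections). Let $\mathcal{C}=\bigcup_{i\in[t]}\mathcal{S}_i=\{s_1,\dots,s_{|\mathcal{C}|}\}$ (distinct 3-sets). The graph $G$: a vertex set $X'=\{v_a:a\in X\}$; for each $s_j=\{a,b,c\}\in\mathcal{C}$ a set gadget $Q_j$ with vertices $u_{ja},u_{jb},u_{jc}$ (interface vertices), $u_j,w_j,u_j',w_j'$, where each of $u_j,w_j$ is adjacent to each of $u_{ja},u_{jb},u_{jc}$, and additionally $u_jw_j,u_ju_j',w_jw_j'$ are edges; for each $s_j\in\mathcal{C}$ and $d\in s_j$ the edge $u_{jd}v_d$ (cross edges); a vertex $p$ and vertices $P=\{p_1,\dots,p_t\}$ with edges $pp_i$ for all $i$; and for each $i\in[t]$ and each $s_j\in\mathcal{C}\setminus\mathcal{S}_i$, edges from $p_i$ to the three interface vertices of $Q_j$. There are no other edges. Set $\ell=2|\mathcal{C}|+\frac{2n}{3}+1$. A matching $M$ saturates a vertex $v$ if $v$ is an endpoint of an edge of $M$; $M$ is acyclic if the subgraph induced by the endpoints of its edges is a forest. 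*)

From mathcomp Require Import all_boot.
Set Implicit Arguments. Unset Strict Implicit. Unset Printing Implicit Defensive.

Section Graph.
Variables (T : finType) (e : rel T).

Definition is_matching (M : {set {set T}}) : Prop :=
  (forall E, E \in M -> exists x y, [/\ x != y, e x y & E = [set x; y]])
  /\ trivIset M.

Definition saturates (M : {set {set T}}) (v : T) : bool := v \in cover M.

Definition induced_forest (A : {set T}) : Prop :=
  ~ exists s : seq T, [/\ uniq s, 2 < size s, {subset s <= A} & cycle e s].

Definition acyclic_matching (M : {set {set T}}) : Prop :=
  is_matching M /\ induced_forest (cover M).
End Graph.

(* raw vertices:
   inl (inl a)           = v_a                 (a in X = 'I_n)
   inl (inr (s, a))      = u_{s a}  interface  (s in C, a in s)
   inr (inl (s, k))      = k=0: u_s, 1: w_s, 2: u'_s, 3: w'_s   (s in C)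
   inr (inr (inl tt))    = p
   inr (inr (inr i))     = p_i                 (i in [t])                 *)
Definition Vraw (n t : nat) : finType :=
  (('I_n + ({set 'I_n} * 'I_n)) + (({set 'I_n} * 'I_4) + (unit + 'I_t)))%type.

Section Construction.
Variables (n t : nat) (S : 'I_t -> {set {set 'I_n}}).

Definition Cset : {set {set 'I_n}} := \bigcup_(i < t) S i.

Definition valid (x : Vraw n t) : bool :=
  match x with
  | inl (inl _) => true
  | inl (inr (s, a)) => (s \in Cset) && (a \in s)
  | inr (inl (s, _)) => s \in Cset
  | inr (inr _) => true
  end.

(* one orientation of each edge *)
Definition arc (x y : Vraw n t) : bool :=
  match x, y with
  (* u_{ja} u_j and u_{ja} w_j *)
  | inl (inr (s, _)), inr (inl (s', k)) => (s == s') && (nat_of_ord k <= 1)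
  (* u_j w_j, u_j u'_j, w_j w'_j *)
  | inr (inl (s, k)), inr (inl (s', k')) =>
      (s == s') &&
      [|| (nat_of_ord k == 0) && (nat_of_ord k' == 1),
          (nat_of_ord k == 0) && (nat_of_ord k' == 2)
        | (nat_of_ord k == 1) && (nat_of_ord k' == 3)]
  (* cross edges u_{jd} v_d *)
  | inl (inr (_, a)), inl (inl b) => a == b
  | inr (inr (inl _)), inr (inr (inr _)) => true
  (* p_i to interface vertices of Q_j for s_j in C \ S_i *)
  | inr (inr (inr i)), inl (inr (s, _)) => s \notin S i
  | _, _ => false
  end.

Definition V : finType := {x : Vraw n t | valid x}.

Definition adj : rel V := fun x y => arc (val x) (val y) || arc (val y) (val x).

Definition vp : V := exist _ (inr (inr (inl tt)) : Vraw n t) isT.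
Definition vP (i : 'I_t) : V := exist _ (inr (inr (inr i)) : Vraw n t) isT.
End Construction.
Arguments adj {n t} S.
Arguments vp {n t} S.
Arguments vP {n t} S i.
Arguments V {n t} S.
Arguments Cset {n t} S.

From mathcomp Require Import all_boot zify.
Set Implicit Arguments. Unset Strict Implicit. Unset Printing Implicit Defensive.

(* Suppose the acyclic matching M does not saturate p.
   Every edge of M then meets a set gadget Q_j, and a vertex p_i can only be
   matched to an interface vertex.  Weighting the matched vertices, we show
   for each gadget Q_j the local inequality
     3 * #(covered vertices of Q_j) + 3 * #(interface vertices matched into P)
       <= 12 + #(interface vertices matched into X'),
   which follows by linear arithmetic from a handful of local constraints:
   the triangles u_j w_j u_ja, the 4-cycles u_ja p_i u_jb u_j (or w_j), the
   pendant vertices u'_j, w'_j and the fact that a vertex has one partner.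
   Summing over the gadgets and using #|cover M| = 2 #|M| and #|X'| = 3c gives
   #|M| <= 2 |C| + 2c < l, a contradiction.  Hence p is saturated, and its
   partner, being a neighbour of p, is some p_q. *)

Section Matching.
Variables (T : finType) (e : rel T).
Hypothesis e_sym : symmetric e.
Variable M : {set {set T}}.
Hypothesis matchingM : is_matching e M.

(* The vertex matched to x, or x itself if x is not saturated. *)
Definition partner (x : T) : T := odflt x [pick y | [set x; y] \in M].

Lemma matching_edge_adj x y : [set x; y] \in M -> (x != y) && e x y.
Proof.
case: matchingM => edgesM _ /edgesM [a [b [nab eab Eab]]].
have Hx : x \in [set a; b] by rewrite -Eab !inE eqxx.
have Hy : y \in [set a; b] by rewrite -Eab !inE eqxx orbT.
have nxy : x != y.
  by apply/eqP=> Exy; move: (cards2 a b); rewrite -Eab Exy setUid cards1 nab.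
rewrite nxy /=; move: Hx Hy nxy; rewrite !inE.
by case/orP=> /eqP -> /orP [] /eqP ->; rewrite ?eqxx // e_sym.
Qed.

(* Edges of M are pairwise disjoint, so the partner is well defined. *)
Lemma partnerE x y : [set x; y] \in M -> partner x = y.
Proof.
move=> Mxy; rewrite /partner; case: pickP => [y' Mxy' | none]; last by rewrite none in Mxy.
have Exy : [set x; y'] = [set x; y].
  apply/eqP; apply: contraT => neq.
  have := trivIsetP matchingM.2 _ _ Mxy' Mxy neq.
  by move/disjointFr => /(_ x); rewrite !inE eqxx => /(_ isT).
have : y \in [set x; y'] by rewrite Exy !inE eqxx orbT.
rewrite !inE => /orP [/eqP Eyx | /eqP -> //].
by move: (matching_edge_adj Mxy); rewrite Eyx eqxx.
Qed.

Lemma partner_edge x : x \in cover M -> [set x; partner x] \in M.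
Proof.
case/bigcupP=> E ME Ex; have [a [b [_ _ Eab]]] := matchingM.1 E ME.
move: Ex; rewrite Eab !inE => /orP [] /eqP ->.
  by rewrite (partnerE (y := b)) -?Eab.
by rewrite (partnerE (y := a)) setUC -?Eab.
Qed.

Lemma partner_cover x : x \in cover M -> partner x \in cover M.
Proof.
move=> Cx; apply/bigcupP; exists [set x; partner x]; first exact: partner_edge.
by rewrite !inE eqxx orbT.
Qed.

Lemma partnerK x : x \in cover M -> partner (partner x) = x.
Proof. by move=> Cx; apply: partnerE; rewrite setUC partner_edge. Qed.

Lemma partner_adj x : x \in cover M -> e x (partner x).
Proof. by move=> Cx; case/andP: (matching_edge_adj (partner_edge Cx)). Qed.

Lemma partner_inj x y : x \in cover M -> y \in cover M -> partner x = partner y -> x = y.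
Proof. by move=> Cx Cy Exy; rewrite -(partnerK Cx) Exy partnerK. Qed.

Lemma card_cover_matching : #|cover M| = 2 * #|M|.
Proof.
move/eqP: matchingM.2 => <-; rewrite mulnC -sum_nat_const.
apply: eq_bigr => E ME.
by have [x [y [nxy _ ->]]] := matchingM.1 E ME; rewrite cards2 nxy.
Qed.
End Matching.

Lemma card_set_sum (T : finType) (P Q : pred T) :
  #|[set x | P x && Q x]| = \sum_(x | P x) Q x.
Proof.
rewrite -sum1dep_card big_mkcond [RHS]big_mkcond /=.
by apply: eq_bigr => x _; case: (P x); case: (Q x).
Qed.

(* Replace every 0/1 quantity nat_of_bool b in the context by a variable
   bounded by 1, so that linear arithmetic treats it as an atom. *)
Ltac bit_to_nat b :=
  let n := fresh "n" in let Hn := fresh "Hn" in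
  have Hn := leq_b1 b; set (n := nat_of_bool b) in *; clearbody n.
Ltac bits_to_nat :=
  repeat match goal with
  | H : context [nat_of_bool ?b] |- _ => bit_to_nat b
  | |- context [nat_of_bool ?b] => bit_to_nat b
  end.

Section ShortCycles.
Variables (T : finType) (e : rel T) (A : {set T}).
Hypothesis forestA : induced_forest e A.

Lemma forest_no_triangle x y z : x \in A -> y \in A -> z \in A ->
  x != y -> y != z -> x != z -> e x y -> e y z -> e z x -> False.
Proof.
move=> Ax Ay Az nxy nyz nxz exy eyz ezx; apply: forestA; exists [:: x; y; z].
split=> //=; first by rewrite !inE negb_or nxy nxz nyz.
  by move=> v; rewrite !inE => /or3P [] /eqP ->.
by rewrite exy eyz ezx.
Qed.

Lemma forest_no_square a b x d : a \in A -> b \in A -> x \in A -> d \in A ->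
  a != b -> a != x -> a != d -> b != x -> b != d -> x != d ->
  e a b -> e b x -> e x d -> e d a -> False.
Proof.
move=> Aa Ab Ax Ad nab nax nad nbx nbd nxd eab ebx exd eda.
apply: forestA; exists [:: a; b; x; d].
split=> //=; first by rewrite !inE !negb_or nab nax nad nbx nbd nxd.
  by move=> v; rewrite !inE => /or4P [] /eqP ->.
by rewrite eab ebx exd eda.
Qed.
End ShortCycles.

Section Construction.
Variables (c t : nat) (S : 'I_t -> {set {set 'I_(3 * c)}}).
Local Notation VV := (V S).
Local Notation C := (Cset S).
Local Notation adjS := (adj S).

Lemma adj_sym : symmetric adjS.
Proof. by move=> x y; rewrite /adj orbC. Qed.

Definition isX (x : VV) : bool := if val x is inl (inl _) then true else false.
Definition isP (x : VV) : bool := if val x is inr (inr (inr _)) then true else false.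
Definition isG (x : VV) : bool :=
  match val x with inl (inr _) | inr (inl _) => true | _ => false end.
Definition gof (x : VV) : {set 'I_(3 * c)} :=
  match val x with inl (inr (s, _)) => s | inr (inl (s, _)) => s | _ => set0 end.
Definition in_gadget (s : {set 'I_(3 * c)}) (x : VV) : bool := isG x && (gof x == s).

Definition kU : 'I_4 := @Ordinal 4 0 isT.
Definition kW : 'I_4 := @Ordinal 4 1 isT.
Definition kU' : 'I_4 := @Ordinal 4 2 isT.
Definition kW' : 'I_4 := @Ordinal 4 3 isT.

Lemma I4_cases (k : 'I_4) : [|| k == kU, k == kW, k == kU' | k == kW'].
Proof. by case: k => [[|[|[|[|k]]]] Hk]. Qed.

Definition mk (r : Vraw (3 * c) t) : VV := insubd (vp S) r.

Lemma mkK r : valid S r -> val (mk r) = r.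
Proof. exact: insubdK. Qed.

Lemma neq_val (x y : VV) r1 r2 : val x = r1 -> val y = r2 -> r1 != r2 -> x != y.
Proof. by move=> <- <-; rewrite (inj_eq val_inj). Qed.

Lemma neq_isP (x y : VV) : isP x -> ~~ isP y -> x != y.
Proof. by move=> Px; apply: contraNneq => <-. Qed.

Lemma adj_vp y : adjS (vp S) y -> isP y.
Proof. by case: y => [[[d|[s a]]|[[s k]|[[]|i]]] Hv]. Qed.

Lemma isP_vP (y : VV) : isP y -> exists q, y = vP S q.
Proof. by case: y => [[[d|[s a]]|[[s k]|[[]|i]]] Hv] //= _; exists i; apply: val_inj. Qed.

Lemma adjP_G x y : isP x -> adjS x y -> y != vp S -> isG y.
Proof.
case: x => [[[d|[s a]]|[[s k]|[[]|i]]] Hv] //= _.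
by case: y => [[[d'|[s' a']]|[[s' k']|[[]|i']]] Hv'].
Qed.

Lemma adjK_P x y s k : val x = inr (inl (s, k)) -> isP y -> adjS x y = false.
Proof.
case: x => [r Hv] /= Er; subst r.
by case: y => [[[d'|[s' a']]|[[s' k']|[[]|i']]] Hv'].
Qed.

Lemma adjI_cases x y s a : val x = inl (inr (s, a)) -> adjS x y ->
  [|| isX y, isP y, val y == inr (inl (s, kU)) | val y == inr (inl (s, kW))].
Proof.
case: x => [r Hv] /= Er; subst r.
case: y => [[[d'|[s' a']]|[[s' k']|[[]|i']]] Hv'] //=; rewrite /adj /= orbF.
case/andP => /eqP <-; case: k' Hv' => [[|[|k']] Hk] Hv' //= _.
- by apply/orP; left; apply/eqP; congr (inr (inl (_, _))); apply: val_inj.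
- by apply/orP; right; apply/eqP; congr (inr (inl (_, _))); apply: val_inj.
Qed.

Lemma pendantU x y s : val x = inr (inl (s, kU')) -> adjS x y -> val y = inr (inl (s, kU)).
Proof.
case: x => [r Hv] /= Er; subst r.
case: y => [[[d'|[s' a']]|[[s' k']|[[]|i']]] Hv'] //=; rewrite /adj /= ?andbF //=.
case: k' Hv' => [[|[|[|[|k']]]] Hk] Hv'; rewrite /= ?andbF ?orbF // => /andP [/eqP -> _].
by congr (inr (inl (_, _))); apply: val_inj.
Qed.

Lemma pendantW x y s : val x = inr (inl (s, kW')) -> adjS x y -> val y = inr (inl (s, kW)).
Proof.
case: x => [r Hv] /= Er; subst r.
case: y => [[[d'|[s' a']]|[[s' k']|[[]|i']]] Hv'] //=; rewrite /adj /= ?andbF //=.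
case: k' Hv' => [[|[|[|[|k']]]] Hk] Hv'; rewrite /= ?andbF ?orbF // => /andP [/eqP -> _].
by congr (inr (inl (_, _))); apply: val_inj.
Qed.

Lemma adjP_interface x y z s a b : isP x -> val y = inl (inr (s, a)) ->
  val z = inl (inr (s, b)) -> adjS x y -> adjS x z.
Proof.
case: x => [[[d|[s' a']]|[[s' k]|[[]|i]]] Hv] //= _.
by case: y => [r Hr] /= Er; subst r; case: z => [r' Hr'] /= Er'; subst r'; rewrite /adj /= !orbF.
Qed.

Lemma adjUI x y s a : val x = inr (inl (s, kU)) -> val y = inl (inr (s, a)) -> adjS x y.
Proof. by case: x => [r Hr] /= Er; subst r; case: y => [r' Hr'] /= Er'; subst r'; rewrite /adj /= eqxx. Qed.

Lemma adjWI x y s a : val x = inr (inl (s, kW)) -> val y = inl (inr (s, a)) -> adjS x y.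
Proof. by case: x => [r Hr] /= Er; subst r; case: y => [r' Hr'] /= Er'; subst r'; rewrite /adj /= eqxx. Qed.

Lemma adjUW x y s : val x = inr (inl (s, kU)) -> val y = inr (inl (s, kW)) -> adjS x y.
Proof. by case: x => [r Hr] /= Er; subst r; case: y => [r' Hr'] /= Er'; subst r'; rewrite /adj /= eqxx. Qed.

Definition iv (s : {set 'I_(3 * c)}) (a : 'I_(3 * c)) : VV := mk (inl (inr (s, a))).
Definition kv (s : {set 'I_(3 * c)}) (k : 'I_4) : VV := mk (inr (inl (s, k))).

Lemma val_iv s e : s \in C -> e \in s -> val (iv s e) = inl (inr (s, e)).
Proof. by move=> Cs se; rewrite mkK //= Cs se. Qed.

Lemma val_kv s k : s \in C -> val (kv s k) = inr (inl (s, k)).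
Proof. by move=> Cs; rewrite mkK //= Cs. Qed.

Lemma enum3_facts (s : {set 'I_(3 * c)}) a b d : enum s = [:: a; b; d] ->
  [/\ a \in s, b \in s, d \in s & [/\ a != b, a != d & b != d]].
Proof.
move=> Es; have sE e : (e \in s) = (e \in [:: a; b; d]) by rewrite -Es mem_enum.
have := enum_uniq (mem s); rewrite Es /= !inE negb_or => /and3P [/andP [nab nad] nbd _].
by rewrite !sE !inE !eqxx !orbT.
Qed.

Lemma gadget_sum s a b d (F : VV -> nat) : s \in C -> enum s = [:: a; b; d] ->
  \sum_(x | in_gadget s x) F x =
  F (iv s a) + F (iv s b) + F (iv s d) + F (kv s kU) + F (kv s kW) + F (kv s kU') + F (kv s kW').
Proof.
move=> Cs Es; have [sa sb sd [nab nad nbd]] := enum3_facts Es.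
have sE e : (e \in s) = (e \in [:: a; b; d]) by rewrite -Es mem_enum.
have valI e : e \in s -> val (iv s e) = inl (inr (s, e)) := val_iv Cs.
have valK k : val (kv s k) = inr (inl (s, k)) := val_kv k Cs.
pose l := [:: iv s a; iv s b; iv s d; kv s kU; kv s kW; kv s kU'; kv s kW'].
have gadgetE x : in_gadget s x = (x \in l).
  apply/idP/idP.
  - case: x => [[[e|[s' e]]|[[s' k]|[[]|i]]] Hv] //=; rewrite /in_gadget /isG /gof /=.
      move/eqP=> Es'; subst s'; rewrite !inE -!val_eqE /= !valI //.
      by case/andP: Hv => _; rewrite sE; rewrite !inE => /or3P [] /eqP ->; rewrite eqxx ?orbT.
    move/eqP=> Es'; subst s'; rewrite !inE -!val_eqE /= !valK.
    by case/or4P: (I4_cases k) => /eqP ->; rewrite eqxx ?orbT.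
  - have Hall : all (in_gadget s) l.
      by rewrite /= /in_gadget /isG /gof !valI // !valK eqxx.
    exact: (allP Hall).
have uniq_l : uniq l.
  rewrite /l /= !inE !negb_or; repeat (apply/andP; split) => //;
  apply/eqP => /(congr1 val); rewrite ?valI ?valK // => -[] //;
  by move/eqP; rewrite ?(negbTE nab) ?(negbTE nad) ?(negbTE nbd).
by rewrite (eq_bigl _ _ gadgetE) -big_uniq // !big_cons big_nil /= !addnA addn0.
Qed.

Variable M : {set {set VV}}.
Hypotheses (matchingM : is_matching adjS M) (forestM : induced_forest adjS (cover M)).
Local Notation partnerM := (partner M).

Definition covered (x : VV) : bool := x \in cover M.
Definition matchedP (x : VV) : bool := covered x && isP (partnerM x).
Definition matchedX (x : VV) : bool := covered x && isX (partnerM x).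
Definition matched_to (x y : VV) : bool := covered x && (partnerM x == y).

Lemma matchedP_covered x : matchedP x <= covered x.
Proof. by rewrite /matchedP; case: (covered x); rewrite ?leq_b1. Qed.

Lemma matchedX_covered x : matchedX x <= covered x.
Proof. by rewrite /matchedX; case: (covered x); rewrite ?leq_b1. Qed.

Lemma matched_to_covered x y : matched_to x y <= covered y.
Proof.
rewrite /matched_to; case Cx: (covered x) => //=; case: eqP => // <-.
by rewrite /covered (partner_cover adj_sym matchingM).
Qed.

Lemma matched_to_excl x y z : x != y -> matched_to x z + matched_to y z <= 1.
Proof.
move=> nxy; rewrite /matched_to.
case Cx: (covered x); case Cy: (covered y); case: eqP => [<-|_]; case: eqP => //= Exy.
by move: nxy; rewrite (partner_inj adj_sym matchingM Cx Cy (esym Exy)) eqxx.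
Qed.

Lemma inner_not_matchedP x s k : val x = inr (inl (s, k)) -> matchedP x = false.
Proof.
move=> Ex; apply/negP => /andP [Cx Px].
by have := partner_adj adj_sym matchingM Cx; rewrite (adjK_P Ex Px).
Qed.

Section Gadget.
Variables (s : {set 'I_(3 * c)}) (U W U' W' : VV).
Hypotheses (EU : val U = inr (inl (s, kU))) (EW : val W = inr (inl (s, kW)))
  (EU' : val U' = inr (inl (s, kU'))) (EW' : val W' = inr (inl (s, kW'))).

Lemma pendantU_partner : covered U' -> partnerM U' = U.
Proof. by move=> C'; apply: val_inj; rewrite EU (pendantU EU' (partner_adj adj_sym matchingM C')). Qed.

Lemma pendantW_partner : covered W' -> partnerM W' = W.
Proof. by move=> C'; apply: val_inj; rewrite EW (pendantW EW' (partner_adj adj_sym matchingM C')). Qed.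

Lemma pendant_covered : (covered U' <= covered U) && (covered W' <= covered W).
Proof.
have cov_partner x : covered x -> covered (partnerM x) := partner_cover adj_sym matchingM (x := x).
apply/andP; split.
  by case C': (covered U') => //; rewrite -(pendantU_partner C') cov_partner.
by case C': (covered W') => //; rewrite -(pendantW_partner C') cov_partner.
Qed.

Variables (I : VV) (a : 'I_(3 * c)).
Hypothesis EI : val I = inl (inr (s, a)).

(* The triangle u_j w_j u_ja is not entirely saturated. *)
Lemma triangle_UWI : covered U + covered W + covered I <= 2.
Proof.
case CU: (covered U); case CW: (covered W); case CI: (covered I) => //; exfalso.
apply: (forest_no_triangle forestM CU CW CI).
- by apply: (neq_val EU EW); apply/eqP => -[].
- exact: neq_val EW EI _.
- exact: neq_val EU EI _.
- exact: adjUW EU EW.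
- exact: adjWI EW EI.
- by rewrite adj_sym; exact: adjUI EU EI.
Qed.

Lemma interface_partner : covered I <= matchedX I + matchedP I + matched_to I U + matched_to I W.
Proof.
rewrite /matchedX /matchedP /matched_to; case CI: (covered I) => //=.
move: (adjI_cases EI (partner_adj adj_sym matchingM CI)); rewrite -EU -EW !val_eqE.
by case/or4P => ->; rewrite ?addn1 ?addnS.
Qed.

Lemma interface_pendant :
  (matched_to I U + covered U' <= 1) && (matched_to I W + covered W' <= 1).
Proof.
have nIU' : I != U' by apply: (neq_val EI EU').
have nIW' : I != W' by apply: (neq_val EI EW').
apply/andP; split; rewrite /matched_to.
  case CI: (covered I); case: eqP => //= EIU; case C': (covered U') => //.
  by move: nIU'; rewrite (partner_inj adj_sym matchingM CI C') ?eqxx // pendantU_partner.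
case CI: (covered I); case: eqP => //= EIW; case C': (covered W') => //.
by move: nIW'; rewrite (partner_inj adj_sym matchingM CI C') ?eqxx // pendantW_partner.
Qed.

Variables (J : VV) (b : 'I_(3 * c)).
Hypotheses (EJ : val J = inl (inr (s, b))) (nab : a != b).

Lemma neq_IJ : I != J.
Proof. by apply: (neq_val EI EJ); apply/eqP => -[] /eqP; rewrite (negbTE nab). Qed.

(* If u_ja is matched to p_i, then p_i u_jb z u_ja is a 4-cycle, for every
   common neighbour z of u_ja and u_jb. *)
Lemma interface_square z : matchedP I -> covered J -> covered z -> partnerM I != z ->
  z != I -> z != J -> adjS J z -> adjS z I -> False.
Proof.
move=> /andP [CI PI] CJ Cz nIz nzI nzJ aJz azI.
have aIpI := partner_adj adj_sym matchingM CI.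
apply: (forest_no_square forestM CI (partner_cover adj_sym matchingM CI) CJ Cz) => //.
- by rewrite eq_sym; apply: neq_isP PI _; rewrite /isP EI.
- exact: neq_IJ.
- by rewrite eq_sym.
- by apply: neq_isP PI _; rewrite /isP EJ.
- by rewrite eq_sym.
- by apply: (adjP_interface PI EI EJ); rewrite adj_sym.
Qed.

Lemma square_inner Z k : val Z = inr (inl (s, k)) ->
  (forall y e, val y = inl (inr (s, e)) -> adjS Z y) ->
  matchedP I + covered J + covered Z <= 2.
Proof.
move=> EZ adjZ; case P: (matchedP I); case CJ: (covered J); case CZ: (covered Z) => //.
exfalso; apply: (interface_square P CJ CZ).
- by case/andP: P => _ PI; apply: neq_isP PI _; rewrite /isP EZ.
- exact: neq_val EZ EI _.
- exact: neq_val EZ EJ _.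
- by rewrite adj_sym; apply: adjZ EJ.
- exact: adjZ EI.
Qed.

Lemma square_matchedP : matchedP I + matchedP J <= 1.
Proof.
case P: (matchedP I); case PJ: (matchedP J) => //; exfalso.
case/andP: (PJ) => CJ PpJ; case/andP: (P) => CI _.
apply: (interface_square (z := partnerM J) P CJ (partner_cover adj_sym matchingM CJ)).
- by apply/eqP => /(partner_inj adj_sym matchingM CI CJ) EIJ; move: neq_IJ; rewrite EIJ eqxx.
- by apply: neq_isP PpJ _; rewrite /isP EI.
- by apply: neq_isP PpJ _; rewrite /isP EJ.
- exact: (partner_adj adj_sym matchingM CJ).
- by apply: (adjP_interface PpJ EJ EI); rewrite adj_sym; exact: (partner_adj adj_sym matchingM CJ).
Qed.
End Gadget.

Lemma gadget_bound s : s \in C -> #|s| = 3 ->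
  \sum_(x | in_gadget s x) (3 * covered x + 3 * matchedP x) <=
  12 + \sum_(x | in_gadget s x) matchedX x.
Proof.
move=> Cs s3; have := cardE s; rewrite s3.
case Es: (enum s) => [|a [|b [|d [|? ?]]]] // _.
have [sa sb sd [nab nad nbd]] := enum3_facts Es.
rewrite !(gadget_sum _ Cs Es).
set U := kv s kU; set W := kv s kW; set U' := kv s kU'; set W' := kv s kW'.
have EU : val U = inr (inl (s, kU)) := val_kv kU Cs.
have EW : val W = inr (inl (s, kW)) := val_kv kW Cs.
have EU' : val U' = inr (inl (s, kU')) := val_kv kU' Cs.
have EW' : val W' = inr (inl (s, kW')) := val_kv kW' Cs.
rewrite (inner_not_matchedP EU) (inner_not_matchedP EW).
rewrite (inner_not_matchedP EU') (inner_not_matchedP EW') !muln0 !addn0.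
have /andP [cU' cW'] := pendant_covered EU EW EU' EW'.
have single I e : val I = inl (inr (s, e)) ->
    [/\ covered U + covered W + covered I <= 2,
        covered I <= matchedX I + matchedP I + matched_to I U + matched_to I W,
        matched_to I U + covered U' <= 1, matched_to I W + covered W' <= 1 &
        [/\ matched_to I U <= covered U, matched_to I W <= covered W,
            matchedP I <= covered I & matchedX I <= covered I]].
  move=> EI; have /andP [pU pW] := interface_pendant EU EW EU' EW' EI.
  split=> //; [exact (triangle_UWI EU EW EI) | exact (interface_partner EU EW EI) |].
  by split; rewrite ?matched_to_covered ?matchedP_covered ?matchedX_covered.
have pair I J e f : val I = inl (inr (s, e)) -> val J = inl (inr (s, f)) -> e != f ->
    [/\ matchedP I + covered J + covered U <= 2, matchedP I + covered J + covered W <= 2,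
        matchedP I + matchedP J <= 1,
        matched_to I U + matched_to J U <= 1 & matched_to I W + matched_to J W <= 1].
  move=> EI EJ nef; have nIJ := neq_IJ EI EJ nef.
  split; rewrite ?matched_to_excl //; last exact (square_matchedP EI EJ nef).
  - by apply: (square_inner EI EJ nef EU) => y g; apply: adjUI.
  - by apply: (square_inner EI EJ nef EW) => y g; apply: adjWI.
have Ea := val_iv Cs sa; have Eb := val_iv Cs sb; have Ed := val_iv Cs sd.
have [A1 A2 A3 A4 [A5 A6 A7 A8]] := single _ _ Ea.
have [B1 B2 B3 B4 [B5 B6 B7 B8]] := single _ _ Eb.
have [D1 D2 D3 D4 [D5 D6 D7 D8]] := single _ _ Ed.
have [P1 P2 P3 P4 P5] := pair _ _ _ _ Ea Eb nab.
have [Q1 Q2 Q3 Q4 Q5] := pair _ _ _ _ Ea Ed nad.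
have [R1 R2 R3 R4 R5] := pair _ _ _ _ Eb Ed nbd.
have [P1' P2' _ _ _] := pair _ _ _ _ Eb Ea (contra_neq esym nab).
have [Q1' Q2' _ _ _] := pair _ _ _ _ Ed Ea (contra_neq esym nad).
have [R1' R2' _ _ _] := pair _ _ _ _ Ed Eb (contra_neq esym nbd).
clear single pair; bits_to_nat.
lia.
Qed.

Section Count.
Hypothesis p_free : vp S \notin cover M.

Lemma card_cover_split : #|cover M| <=
  #|[set x | isG x && covered x]| + #|[set x | isP x && covered x]| + #|[set x | isX x && covered x]|.
Proof.
have sub : cover M \subset
    [set x | isG x && covered x] :|: [set x | isP x && covered x] :|: [set x | isX x && covered x].
  apply/subsetP => x Cx; rewrite !inE /covered Cx !andbT.
  move: Cx p_free; case: x => [[[d|[s a]]|[[s k]|[[]|i]]] Hv] //= Cx.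
  have E : vp S = exist _ (inr (inr (inl tt))) Hv by apply: val_inj.
  by rewrite E Cx.
apply: (leq_trans (subset_leq_card sub)).
by rewrite cardsU (leq_trans (leq_subr _ _)) // leq_add2r cardsU leq_subr.
Qed.

Lemma card_P_covered :
  #|[set x | isP x && covered x]| <= #|[set x | isG x && matchedP x]|.
Proof.
suff sub : [set x | isP x && covered x] \subset partnerM @: [set x | isG x && matchedP x].
  exact: leq_trans (subset_leq_card sub) (leq_imset_card _ _).
apply/subsetP => x; rewrite inE => /andP [Px Cx].
have Cy := partner_cover adj_sym matchingM Cx.
have Gy : isG (partnerM x).
  by apply: (adjP_G Px (partner_adj adj_sym matchingM Cx)); apply: contraNneq p_free => <-.
apply/imsetP; exists (partnerM x); last by rewrite (partnerK adj_sym matchingM Cx).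
by rewrite inE Gy /matchedP /covered Cy (partnerK adj_sym matchingM Cx) Px.
Qed.
End Count.

Lemma card_matchedX :
  #|[set x | isG x && matchedX x]| <= #|[set x | isX x && covered x]|.
Proof.
have inj : {in [set x | isG x && matchedX x] &, injective partnerM}.
  move=> x y; rewrite !inE => /and3P [_ Cx _] /and3P [_ Cy _].
  exact: (partner_inj adj_sym matchingM Cx Cy).
rewrite -(card_in_imset inj); apply: subset_leq_card.
apply/subsetP => y /imsetP [x]; rewrite inE => /and3P [_ Cx Xx] ->.
by rewrite inE Xx /covered (partner_cover adj_sym matchingM Cx).
Qed.

Lemma card_X_covered : #|[set x | isX x && covered x]| <= 3 * c.
Proof.
have sub : [set x | isX x && covered x] \subset [set mk (inl (inl d)) | d in 'I_(3 * c)].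
  apply/subsetP => x; rewrite inE; case: x => [[[d|[s a]]|[[s k]|[[]|i]]] Hv] //= _.
  by apply/imsetP; exists d => //; apply: val_inj; rewrite /= mkK.
by rewrite (leq_trans (subset_leq_card sub)) // (leq_trans (leq_imset_card _ _)) // card_ord.
Qed.

Lemma gadgets_bound : (forall i s, s \in S i -> #|s| = 3) ->
  3 * #|[set x | isG x && covered x]| + 3 * #|[set x | isG x && matchedP x]| <=
  12 * #|C| + #|[set x | isG x && matchedX x]|.
Proof.
move=> S3; rewrite !card_set_sum !big_distrr -big_split /=.
have gofC x : isG x -> gof x \in C.
  by case: x => [[[d|[s a]]|[[s k]|[[]|i]]] Hv] //= _; rewrite /gof /=; case/andP: Hv.
rewrite (partition_big gof (mem C) gofC) (partition_big gof (mem C) gofC) /=.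
rewrite (mulnC 12 #|C|) -sum_nat_const -big_split /=; apply: leq_sum => s Cs.
apply: (gadget_bound Cs); case/bigcupP: Cs => i _; exact: S3.
Qed.

Lemma unsaturated_bound : (forall i s, s \in S i -> #|s| = 3) -> vp S \notin cover M ->
  #|M| <= 2 * #|C| + 2 * c.
Proof.
move=> S3 p_free.
have := card_cover_matching matchingM; have := card_cover_split p_free.
have := card_P_covered p_free; have := card_matchedX; have := card_X_covered.
have := gadgets_bound S3; lia.
Qed.

End Construction.
Arguments adj_sym {c t S}.

Theorem lemma15 (c t m : nat) (S : 'I_t -> {set {set 'I_(3 * c)}})
  (HS3 : forall i s, s \in S i -> #|s| = 3)
  (Hm : forall i, #|S i| = m)
  (Hdist : injective S)
  (M : {set {set V S}}) :
  acyclic_matching (adj S) M ->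
  2 * #|Cset S| + 2 * c + 1 <= #|M| ->
  saturates M (vp S) /\ exists q : 'I_t, [set vp S; vP S q] \in M.
Proof.
move=> [matchingM forestM] large.
have p_sat : vp S \in cover M.
  apply: contraT => p_free.
  by have := unsaturated_bound matchingM forestM HS3 p_free; lia.
split; first exact: p_sat.
have [q Eq] := isP_vP (adj_vp (partner_adj adj_sym matchingM p_sat)).
by exists q; rewrite -Eq; apply: (partner_edge adj_sym matchingM p_sat).
Qed.
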